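(* Let $\Pi$ be a matroid secretary problem on a fixed finite matroid, whose instances are assignments of positive weights to the matroid elements. There is a bijection $B$ between probability distributions with finite support over instances of $\Pi$ such that, for every such $D$ and every $r$, there exists an algorithm with type 2 performance guarantee $r$ on $D$ if and only if there exists an algorithm with type 3 performance guarantee $r$ on $B(D)$.
   Context: In the matroid secretary problem the elements of a matroid arrive in uniformly random order revealing their weights; the algorithm must irrevocably accept or reject each on arrival, keeping the accepted set independent. For an instance $I$, $a(I)$ is the set accepted by algorithm $a$, $opt(I)$ a maximum-weight independent set, and $w(X)$ the total weight of $X$. Algorithm $a$ has type 2 performance guarantee $r$ on a distribution $D$ if $\mathbb{E}_{I\sim D}[w(a(I))/w(opt(I))]\ge r$, and type 3 performance guarantee $r$ on $D$ if $\mathbb{E}_{I\sim D}[w(a(I))]\ge r\cdot\mathbb{E}_{I\sim D}[w(opt(I))]$; the expectations of $w(a(I))$ are also over the random arrival order and the algorithm's randomness. *)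

From HB Require Import structures.
From mathcomp Require Import all_boot all_order all_algebra all_fingroup.
From mathcomp Require Import finmap.
From mathcomp Require Import reals.
Set Implicit Arguments. Unset Strict Implicit. Unset Printing Implicit Defensive.
Import Order.TTheory GRing.Theory Num.Theory.
Local Open Scope ring_scope.

Section MatroidSecretary.
Variables (R : realType) (E : finType).

Definition is_matroid (indep : {set E} -> bool) : Prop :=
  [/\ indep set0,
      (forall A B : {set E}, A \subset B -> indep B -> indep A) &
      (forall A B : {set E}, indep A -> indep B -> (#|A| < #|B|)%N ->
         exists2 e, e \in B :\: A & indep (e |: A))].

Definition weights := {ffun E -> R}.
Definition is_instance (w : weights) : bool := [forall e, 0 < w e].

Definition wsum (w : weights) (A : {set E}) : R := \sum_(e in A) w e.

Definition opt_val (indep : {set E} -> bool) (w : weights) : R :=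
  \big[Num.max/0]_(A : {set E} | indep A) wsum w A.

Definition is_fdist (D : {fsfun weights -> R with 0}) : bool :=
  all (fun w => (0 < D w) && is_instance w) (finsupp D) &&
  (\sum_(w <- finsupp D) D w == 1).

Definition fdist := {D : {fsfun weights -> R with 0} | is_fdist D}.

Definition fexp (D : fdist) (f : weights -> R) : R :=
  \sum_(w <- finsupp (val D)) val D w * f w.

(* A deterministic online algorithm: given the history of revealed
   (element, weight) pairs so far, the arriving element and its weight,
   decide whether to accept it. *)
Definition det_alg := seq (E * R) -> E -> R -> bool.

Fixpoint run_aux (indep : {set E} -> bool) (a : det_alg) (w : weights)
    (hist : seq (E * R)) (A : {set E}) (s : seq E) : {set E} :=
  match s with
  | [::] => A
  | e :: s' =>
      let acc := a hist e (w e) && indep (e |: A) in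
      run_aux indep a w (rcons hist (e, w e)) (if acc then e |: A else A) s'
  end.

Definition run indep (a : det_alg) (w : weights) (s : seq E) : {set E} :=
  run_aux indep a w [::] set0 s.

(* Arrival orders: uniformly random; p : {perm E} gives order map p (enum E). *)
Definition arrival (p : {perm E}) : seq E := [seq p x | x <- enum E].

Definition avg_perm (f : {perm E} -> R) : R :=
  (#|{perm E}|%:R)^-1 * \sum_(p : {perm E}) f p.

(* A (randomized) algorithm: a finite-support probability mixture of
   deterministic algorithms. *)
Definition alg := seq (R * det_alg).
Definition valid_alg (a : alg) : Prop :=
  all (fun x : R => 0 <= x) (map fst a) /\ \sum_(q <- a) q.1 = 1.

Definition alg_exp (a : alg) (f : {perm E} -> det_alg -> R) : R :=
  \sum_(q <- a) q.1 * avg_perm (fun p => f p q.2).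

Definition type2 indep (a : alg) (D : fdist) (r : R) : Prop :=
  fexp D (fun w => alg_exp a (fun p d =>
            wsum w (run indep d w (arrival p)) / opt_val indep w)) >= r.

Definition type3 indep (a : alg) (D : fdist) (r : R) : Prop :=
  fexp D (fun w => alg_exp a (fun p d => wsum w (run indep d w (arrival p))))
    >= r * fexp D (fun w => opt_val indep w).

End MatroidSecretary.

From HB Require Import structures.
From mathcomp Require Import all_boot all_order all_algebra all_fingroup.
From mathcomp Require Import finmap.
From mathcomp Require Import reals.
From mathcomp Require Import ring.
Set Implicit Arguments. Unset Strict Implicit. Unset Printing Implicit Defensive.
Import Order.TTheory GRing.Theory Num.Theory.
Local Open Scope ring_scope.

(* B reweights D by the inverse optimum: B(D)(I) is proportional to
   D(I) / w(opt(I)).  With Z the normalising constant, the expectation of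
   w(a(I)) under B(D) is Z^-1 times the expected ratio w(a(I))/w(opt(I))
   under D, while the expected optimum under B(D) is exactly Z^-1; so both
   guarantees say the same thing up to the positive factor Z^-1.  The inverse
   of B reweights by the optimum itself. *)

Section Reweighting.
Variables (R : realType) (E : finType).
Implicit Types (D : fdist R E) (c f g : weights R E -> R).

Lemma fdist_gt0 D w : w \in finsupp (val D) -> 0 < val D w.
Proof. by case: D => D /= /andP[/allP supp _] /supp /andP[]. Qed.

Lemma fdist_instance D w : w \in finsupp (val D) -> is_instance w.
Proof. by case: D => D /= /andP[/allP supp _] /supp /andP[]. Qed.

Lemma fdist_sum1 D : \sum_(w <- finsupp (val D)) val D w = 1.
Proof. by case: D => D /= /andP[_ /eqP]. Qed.

Lemma eq_fexp D f g : (forall w, is_instance w -> f w = g w) ->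
  fexp D f = fexp D g.
Proof.
move=> efg; rewrite /fexp !big_seq; apply: eq_bigr => w wD.
by rewrite efg // (fdist_instance wD).
Qed.

Lemma fexp1 D : fexp D (fun=> 1) = 1.
Proof. by rewrite /fexp -[RHS](fdist_sum1 D); apply: eq_bigr => w _; rewrite mulr1. Qed.

Lemma fexp_gt0 D c : (forall w, is_instance w -> 0 < c w) -> 0 < fexp D c.
Proof.
move=> c_gt0; have [w wD] : exists w, w \in finsupp (val D).
  apply/fset0Pn/eqP => supp0; have := fdist_sum1 D.
  by rewrite supp0 big_seq_fset0 => /eqP; rewrite eq_sym oner_eq0.
rewrite /fexp (bigD1_seq w) ?fset_uniq //=.
apply: ltr_pwDl; first by rewrite mulr_gt0 ?fdist_gt0 ?c_gt0 ?(fdist_instance wD).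
rewrite big_seq_cond; apply: sumr_ge0 => v /andP[vD _].
by rewrite ltW // mulr_gt0 ?fdist_gt0 ?c_gt0 ?(fdist_instance vD).
Qed.

Section Positive.
Variables (c : weights R E -> R) (c_gt0 : forall w, is_instance w -> 0 < c w).

Definition reweight_fun D : {fsfun weights R E -> R with 0} :=
  [fsfun w in finsupp (val D) => val D w * c w / fexp D c].

Lemma reweight_funE D w : reweight_fun D w =
  if w \in finsupp (val D) then val D w * c w / fexp D c else 0.
Proof. by rewrite fsfun_fun. Qed.

Lemma finsupp_reweight D : finsupp (reweight_fun D) = finsupp (val D).
Proof.
apply/fsetP => w; rewrite mem_finsupp reweight_funE.
case: ifP => [wD|]; last by rewrite eqxx.
by rewrite gt_eqF // !mulr_gt0 ?invr_gt0 ?fexp_gt0 ?fdist_gt0 ?c_gt0 ?(fdist_instance wD).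
Qed.

Lemma fexp_reweight_fun D f :
  \sum_(w <- finsupp (reweight_fun D)) reweight_fun D w * f w
  = (fexp D c)^-1 * fexp D (fun w => c w * f w).
Proof.
rewrite finsupp_reweight [fexp D (fun _ => _ * _)]/fexp mulr_sumr !big_seq.
by apply: eq_bigr => w wD; rewrite reweight_funE wD; ring.
Qed.

Lemma reweight_is_fdist D : is_fdist (reweight_fun D).
Proof.
apply/andP; split; rewrite ?finsupp_reweight.
  apply/allP => w wD; rewrite reweight_funE wD (fdist_instance wD) andbT.
  by rewrite !mulr_gt0 ?invr_gt0 ?fexp_gt0 ?fdist_gt0 ?c_gt0 ?(fdist_instance wD).
apply/eqP; rewrite -finsupp_reweight.
under eq_bigr do rewrite -[reweight_fun D _]mulr1.
rewrite fexp_reweight_fun (@eq_fexp D _ c) ?mulVf ?gt_eqF ?fexp_gt0 // => w _.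
by rewrite mulr1.
Qed.

Definition reweight D : fdist R E := exist _ (reweight_fun D) (reweight_is_fdist D).

Lemma fexp_reweight D f :
  fexp (reweight D) f = (fexp D c)^-1 * fexp D (fun w => c w * f w).
Proof. exact: fexp_reweight_fun. Qed.

End Positive.

Lemma reweightK c c' (c_gt0 : forall w, is_instance w -> 0 < c w)
    (c'_gt0 : forall w, is_instance w -> 0 < c' w) :
  (forall w, is_instance w -> c w * c' w = 1) ->
  cancel (reweight c_gt0) (reweight c'_gt0).
Proof.
move=> cc'1 D; apply: val_inj; apply/fsfunP => w /=.
have fexp_c' : fexp (reweight c_gt0 D) c' = (fexp D c)^-1.
  by rewrite fexp_reweight -[RHS]mulr1 -(fexp1 D); congr (_ * _); exact: eq_fexp.
rewrite reweight_funE (finsupp_reweight c_gt0) fexp_c' invrK.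
case: ifPn => wD; last by rewrite fsfun_dflt.
rewrite reweight_funE wD.
have fexp_c_neq0 : fexp D c != 0 by rewrite gt_eqF ?fexp_gt0.
rewrite -[in RHS](mulr1 (val D w)) -(cc'1 w (fdist_instance wD)).
by field.
Qed.

End Reweighting.

Lemma opt_val_gt0 (R : realType) (E : finType) (indep : {set E} -> bool)
    (w : weights R E) :
  (exists e : E, indep [set e]) -> is_instance w -> 0 < opt_val indep w.
Proof.
move=> [e indep_e] /forallP w_gt0; apply: (lt_le_trans (w_gt0 e)).
have -> : w e = wsum w [set e] by rewrite /wsum big_set1.
exact: le_bigmax_seq (mem_index_enum _) indep_e.
Qed.

Lemma alg_exp_mulr (R : realType) (E : finType) (a : alg R E)
    (f : {perm E} -> det_alg R E -> R) k :
  alg_exp a (fun p d => f p d * k) = alg_exp a f * k.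
Proof.
rewrite /alg_exp mulr_suml; apply: eq_bigr => q _.
by rewrite /avg_perm -mulr_suml -!mulrA.
Qed.

Lemma type2_type3_reweight (R : realType) (E : finType)
    (indep : {set E} -> bool) (opt_inv_gt0 : forall w : weights R E,
      is_instance w -> 0 < (opt_val indep w)^-1)
    (a : alg R E) (D : fdist R E) (r : R) :
  type2 indep a D r <-> type3 indep a (reweight opt_inv_gt0 D) r.
Proof.
rewrite /type2 /type3 !fexp_reweight.
have -> : fexp D (fun w => (opt_val indep w)^-1 * opt_val indep w) = 1.
  rewrite -(fexp1 D); apply: eq_fexp => w /opt_inv_gt0.
  by rewrite invr_gt0 => /gt_eqF /negbT; exact: mulVf.
under eq_fexp do rewrite alg_exp_mulr mulrC.
by rewrite mulr1 mulrC ler_pM2l ?invr_gt0 ?fexp_gt0.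
Qed.

Theorem lemma5p9 (R : realType) (E : finType) (indep : {set E} -> bool)
  (hM : is_matroid indep) (hrank : exists e : E, indep [set e]) :
  exists B : fdist R E -> fdist R E,
    bijective B /\
    forall (D : fdist R E) (r : R),
      (exists a : alg R E, valid_alg a /\ type2 indep a D r) <->
      (exists a : alg R E, valid_alg a /\ type3 indep a (B D) r).
Proof.
have opt_gt0 (w : weights R E) : is_instance w -> 0 < opt_val indep w.
  exact: opt_val_gt0.
have opt_inv_gt0 (w : weights R E) : is_instance w -> 0 < (opt_val indep w)^-1.
  by move=> /opt_gt0; rewrite invr_gt0.
exists (reweight opt_inv_gt0); split.
  exists (reweight opt_gt0); apply: reweightK => w /opt_gt0 /gt_eqF /negbT.
    exact: mulVf.
  exact: mulfV.
move=> D r; split=> -[a [a_valid guarantee]]; exists a; split=> //.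
  exact/(type2_type3_reweight opt_inv_gt0).
exact/(type2_type3_reweight opt_inv_gt0).
Qed.
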